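(* Let $T:[a,b]\times[c,d]\to\mathbb{R}$ be the function constructed from a generating function $\phi$ as described in the context. If there is $y_0\in[c,d]$ such that $x\mapsto\phi(x,y_0)$ is non-constant on $[a_0,a_1]$, then $T$ is not of bounded variation in the sense of Arzelà on $[a,b]\times[c,d]$.
   Context: Let $a<b$, $c<d$. Set $a_0=a$ and $a_n=a+(b-a)(\tfrac12+\tfrac14+\dots+\tfrac1{2^n})$ for $n\in\mathbb{N}$, so $a_n\uparrow b$. Let $\phi:[a_0,a_1]\times[c,d]\to\mathbb{R}$ be continuous with $\phi(a_0,y)=\phi(a_1,y)$ for all $y\in[c,d]$ (the generating function). For $n\ge1$ let $\psi_n:[a_{n-1},a_n]\to[a_0,a_1]$ be the increasing affine bijection $\psi_n(x)=\frac{2^n[(a_1-a_0)x+a_0a_n-a_1a_{n-1}]}{b-a}$. Let $F_1=\phi$ on $[a_0,a_1]\times[c,d]$ and for $n\ge2$, $F_n(x,y)=\frac1n\phi(\psi_n(x),y)+\frac{n-1}{n}\phi(a_0,y)$ for $(x,y)\in[a_{n-1},a_n]\times[c,d]$. Define $T_n(x,y)=F_k(x,y)$ for $(x,y)\in[a_{k-1},a_k]\times[c,d]$, $k=1,\dots,n$, and $T_n(x,y)=F_n(a_n,y)$ for $(x,y)\in[a_n,b]\times[c,d]$; and $T(x,y)=\lim_{n\to\infty}T_n(x,y)$. A function $f:[a,b]\times[c,d]\to\mathbb{R}$ is of bounded variation in the sense of Arzelà if there is $K$ such that for all $m$ and all $a=x_0\le\dots\le x_m=b$, $c=y_0\le\dots\le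 y_m=d$, $\sum_{i=0}^{m-1}|f(x_{i+1},y_{i+1})-f(x_i,y_i)|\le K$. *)

From Stdlib Require Import Reals Lra.
From Coquelicot Require Import Coquelicot.
Open Scope R_scope.

Fixpoint rsum (g : nat -> R) (m : nat) : R :=
  match m with O => 0 | S k => rsum g k + g k end.

Definition geo (n : nat) : R := rsum (fun k => / 2 ^ (S k)) n.

Definition seq_a (a b : R) (n : nat) : R := a + (b - a) * geo n.

Definition psi (a b : R) (n : nat) (x : R) : R :=
  2 ^ n * ((seq_a a b 1 - seq_a a b 0) * x
           + seq_a a b 0 * seq_a a b n - seq_a a b 1 * seq_a a b (pred n)) / (b - a).

Definition Fn (a b : R) (phi : R -> R -> R) (n : nat) (x y : R) : R :=
  match n with
  | O | S O => phi x y
  | _ => / INR n * phi (psi a b n x) y + (INR n - 1) / INR n * phi (seq_a a b 0) y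
  end.

(* piecewise gluing of F_1, ..., F_n on [a_0, a_n]:
   equal to F_k on [a_{k-1}, a_k] (the pieces agree at the junction points) *)
Fixpoint Gpieces (a b : R) (phi : R -> R -> R) (n : nat) (x y : R) : R :=
  match n with
  | O | S O => Fn a b phi 1 x y
  | S m => if Rle_dec x (seq_a a b m) then Gpieces a b phi m x y
           else Fn a b phi (S m) x y
  end.

Definition Tn (a b : R) (phi : R -> R -> R) (n : nat) (x y : R) : R :=
  if Rle_dec x (seq_a a b n) then Gpieces a b phi n x y
  else Fn a b phi n (seq_a a b n) y.

(* T = pointwise limit of T_n (index shifted so the sequence starts at T_1) *)
Definition Tlim (a b : R) (phi : R -> R -> R) (x y : R) : R :=
  real (Lim_seq (fun n => Tn a b phi (S n) x y)).

Definition cont_on_rect (f : R -> R -> R) (a1 b1 c d : R) : Prop :=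
  forall x y, a1 <= x <= b1 -> c <= y <= d ->
  forall eps, 0 < eps -> exists delta, 0 < delta /\
    forall x' y', a1 <= x' <= b1 -> c <= y' <= d ->
      Rabs (x' - x) < delta -> Rabs (y' - y) < delta ->
      Rabs (f x' y' - f x y) < eps.

Definition arzela_BV (f : R -> R -> R) (a b c d : R) : Prop :=
  exists K : R, forall (m : nat) (xs ys : nat -> R),
    xs O = a -> xs m = b -> ys O = c -> ys m = d ->
    (forall i, (i < m)%nat -> xs i <= xs (S i)) ->
    (forall i, (i < m)%nat -> ys i <= ys (S i)) ->
    rsum (fun i => Rabs (f (xs (S i)) (ys (S i)) - f (xs i) (ys i))) m <= K.

(* Write a_k for seq_a a b k.  On the k-th block [a_k, a_{k+1}] the limit T
   coincides with F_{k+1}, which is a copy of phi rescaled horizontally by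
   2^{-k} and vertically by 1/(k+1):
       T(a_k + (w - a)/2^k, y) = phi(w, y)/(k+1) + (1 - 1/(k+1)) phi(a, y).
   Hence if phi(u, y0) <> phi(v, y0) with a <= u <= v <= a_1, the monotone
   chain that visits, in every block k < N, the two images of u and v on the
   horizontal line y = y0 has variation at least
       |phi(v, y0) - phi(u, y0)| * (1 + 1/2 + ... + 1/N),
   which is unbounded since the harmonic series diverges.  Bounded variation
   in the sense of Arzelà bounds every monotone chain inside the rectangle
   (pad it with the two corners), a contradiction. *)

From Stdlib Require Import Reals Lra Lia.
From Coquelicot Require Import Coquelicot.
Open Scope R_scope.

Lemma rsum_ext_lt (f g : nat -> R) (m : nat) :
  (forall i, (i < m)%nat -> f i = g i) -> rsum f m = rsum g m.
Proof.
  induction m as [|m IH]; intros Hfg; [reflexivity|].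
  cbn [rsum]. rewrite IH, Hfg; [reflexivity | lia | intros; apply Hfg; lia].
Qed.

Lemma rsum_scal (r : R) (g : nat -> R) (m : nat) :
  rsum (fun i => r * g i) m = r * rsum g m.
Proof. induction m as [|m IH]; cbn [rsum]; [ring | rewrite IH; ring]. Qed.

Lemma rsum_shift (g : nat -> R) (m : nat) :
  rsum g (S m) = g O + rsum (fun i => g (S i)) m.
Proof. induction m as [|m IH]; cbn [rsum] in *; [ring | rewrite IH; ring]. Qed.

Lemma rsum_even_le (g : nat -> R) (N : nat) :
  (forall i, 0 <= g i) -> rsum (fun k => g (2 * k)%nat) N <= rsum g (2 * N).
Proof.
  intros Hg. induction N as [|N IH]; [simpl; lra|]. cbn [rsum].
  replace (2 * S N)%nat with (S (S (2 * N))) by lia. cbn [rsum].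
  specialize (Hg (S (2 * N))). lra.
Qed.

Definition harmonic (N : nat) : R := rsum (fun k => / INR (S k)) N.

(* Telescoping exp(1/(n+1)) >= 1 + 1/(n+1) = (n+2)/(n+1). *)
Lemma harmonic_exp (N : nat) : INR N + 1 <= exp (harmonic N).
Proof.
  unfold harmonic. induction N as [|N IH]; cbn [rsum].
  - rewrite exp_0. simpl. lra.
  - rewrite exp_plus, S_INR.
    assert (Hpos : 0 < INR N + 1) by (pose proof (pos_INR N); lra).
    pose proof (exp_ineq1_le (/ (INR N + 1))) as Hexp.
    assert (0 < / (INR N + 1)) by (apply Rinv_0_lt_compat; lra).
    apply Rle_trans with ((INR N + 1) * (1 + / (INR N + 1))).
    + right. field. lra.
    + apply Rmult_le_compat; lra.
Qed.

Lemma harmonic_unbounded (M : R) : exists N, M < harmonic N.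
Proof.
  destruct (INR_unbounded (exp M)) as [N HN]. exists N.
  apply exp_lt_inv. pose proof (harmonic_exp N). lra.
Qed.

(* Bounded variation in the sense of Arzelà bounds the variation of every
   monotone chain in the rectangle, not only of those joining the corners:
   such a chain is extended by the corners (a,c) and (b,d), which only adds
   nonnegative terms. *)

Definition pad (lo hi : R) (m : nat) (s : nat -> R) (i : nat) : R :=
  match i with O => lo | S j => if (j <=? m)%nat then s j else hi end.

Lemma pad_mono (lo hi : R) (m : nat) (s : nat -> R) :
  (forall i, (i <= m)%nat -> lo <= s i <= hi) ->
  (forall i, (i < m)%nat -> s i <= s (S i)) ->
  forall i, (i < S (S m))%nat -> pad lo hi m s i <= pad lo hi m s (S i).
Proof.
  intros Hrange Hmono [|j] Hj; cbn [pad].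
  - rewrite (proj2 (Nat.leb_le 0 m)) by lia. apply Hrange; lia.
  - destruct (Nat.leb_spec j m), (Nat.leb_spec (S j) m); try lia.
    + apply Hmono; lia.
    + apply Hrange; lia.
Qed.

Lemma arzela_BV_chain (f : R -> R -> R) (a b c d : R) :
  arzela_BV f a b c d -> exists K, forall (m : nat) (xs ys : nat -> R),
    (forall i, (i <= m)%nat -> a <= xs i <= b /\ c <= ys i <= d) ->
    (forall i, (i < m)%nat -> xs i <= xs (S i)) ->
    (forall i, (i < m)%nat -> ys i <= ys (S i)) ->
    rsum (fun i => Rabs (f (xs (S i)) (ys (S i)) - f (xs i) (ys i))) m <= K.
Proof.
  intros [K HK]. exists K. intros m xs ys Hrange Hxs Hys.
  set (var := fun xs ys : nat -> R => fun i =>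
                Rabs (f (xs (S i)) (ys (S i)) - f (xs i) (ys i))).
  assert (Hend : forall lo hi s, pad lo hi m s (S (S m)) = hi).
  { intros. cbn [pad]. rewrite (proj2 (Nat.leb_gt (S m) m)) by lia. reflexivity. }
  assert (Hbound := HK (S (S m)) (pad a b m xs) (pad c d m ys) eq_refl
            (Hend a b xs) eq_refl (Hend c d ys)
            (pad_mono a b m xs (fun i Hi => proj1 (Hrange i Hi)) Hxs)
            (pad_mono c d m ys (fun i Hi => proj2 (Hrange i Hi)) Hys)).
  set (g := var (pad a b m xs) (pad c d m ys)).
  change (rsum g (S m) + g (S m) <= K) in Hbound.
  rewrite rsum_shift, (rsum_ext_lt _ (var xs ys)) in Hbound.
  2:{ intros i Hi. unfold g, var. cbn [pad].
      rewrite (proj2 (Nat.leb_le i m)), (proj2 (Nat.leb_le (S i) m)) by lia.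
      reflexivity. }
  assert (0 <= g O) by apply Rabs_pos.
  assert (0 <= g (S m)) by apply Rabs_pos.
  change (rsum (var xs ys) m <= K). lra.
Qed.

Section Construction.

Variables a b : R.
Hypothesis Hab : a < b.

Lemma seq_a_closed (n : nat) : seq_a a b n = b - (b - a) / 2 ^ n.
Proof.
  assert (Hgeo : geo n = 1 - / 2 ^ n).
  { unfold geo. induction n as [|n IH]; cbn [rsum].
    - simpl. field.
    - rewrite IH. simpl pow. field. apply pow_nonzero; lra. }
  unfold seq_a. rewrite Hgeo. field. apply pow_nonzero; lra.
Qed.

Lemma seq_a_0 : seq_a a b 0 = a.
Proof. rewrite seq_a_closed. simpl. field. Qed.

Lemma seq_a_le_succ (n : nat) : seq_a a b n <= seq_a a b (S n).
Proof.
  rewrite !seq_a_closed. simpl pow.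
  assert (0 < (b - a) / 2 ^ n) by (apply Rdiv_lt_0_compat; [lra | apply pow_lt; lra]).
  replace ((b - a) / (2 * 2 ^ n)) with ((b - a) / 2 ^ n / 2)
    by (field; apply pow_nonzero; lra).
  lra.
Qed.

Lemma seq_a_mono (n k : nat) : (n <= k)%nat -> seq_a a b n <= seq_a a b k.
Proof.
  induction 1; [lra|]. eapply Rle_trans; [eassumption | apply seq_a_le_succ].
Qed.

Lemma seq_a_le_b (n : nat) : seq_a a b n <= b.
Proof.
  rewrite seq_a_closed.
  assert (0 < (b - a) / 2 ^ n) by (apply Rdiv_lt_0_compat; [lra | apply pow_lt; lra]).
  lra.
Qed.

Lemma psi_succ (m : nat) (x : R) :
  psi a b (S m) x = 2 ^ m * (x - seq_a a b m) + a.
Proof.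
  unfold psi. simpl pred. rewrite !seq_a_closed. simpl pow.
  field. split; [apply pow_nonzero; lra | lra].
Qed.

(* rescale k maps [a, a_1] affinely onto the k-th block [a_k, a_{k+1}];
   it inverts psi_{k+1}. *)
Definition rescale (k : nat) (w : R) : R := seq_a a b k + (w - a) / 2 ^ k.

Lemma rescale_a (k : nat) : rescale k a = seq_a a b k.
Proof. unfold rescale. unfold Rdiv. ring. Qed.

Lemma rescale_a1 (k : nat) : rescale k (seq_a a b 1) = seq_a a b (S k).
Proof. unfold rescale. rewrite !seq_a_closed. simpl pow. field. apply pow_nonzero; lra. Qed.

Lemma rescale_mono (k : nat) (u v : R) : u <= v -> rescale k u <= rescale k v.
Proof.
  intros Huv. unfold rescale, Rdiv. apply Rplus_le_compat_l, Rmult_le_compat_r; [|lra].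
  left. apply Rinv_0_lt_compat, pow_lt. lra.
Qed.

Lemma rescale_in_block (k : nat) (w : R) : a <= w <= seq_a a b 1 ->
  seq_a a b k <= rescale k w <= seq_a a b (S k).
Proof.
  intros Hw. rewrite <- rescale_a, <- rescale_a1.
  split; apply rescale_mono; lra.
Qed.

Section Values.

Variable phi : R -> R -> R.
Variable y : R.
Hypothesis Hper : phi (seq_a a b 0) y = phi (seq_a a b 1) y.

Lemma Fn_rescale (k : nat) (w : R) :
  Fn a b phi (S k) (rescale k w) y
  = / INR (S k) * phi w y + (1 - / INR (S k)) * phi a y.
Proof.
  destruct k as [|k]; cbn [Fn].
  - unfold rescale. rewrite seq_a_0. simpl. rewrite Rinv_1.
    replace (a + (w - a) / 1) with w by field. ring.
  - rewrite psi_succ. unfold rescale.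
    replace (2 ^ S k * (seq_a a b (S k) + (w - a) / 2 ^ S k - seq_a a b (S k)) + a)
      with w by (field; apply pow_nonzero; lra).
    rewrite seq_a_0. field. apply not_0_INR. lia.
Qed.

(* At both ends of its block, F_{k+1} takes the value phi(a, y); so the
   consecutive pieces F_k glue continuously. *)
Lemma Fn_left (k : nat) : Fn a b phi (S k) (seq_a a b k) y = phi a y.
Proof. rewrite <- rescale_a, Fn_rescale. ring. Qed.

Lemma Fn_right (k : nat) : Fn a b phi (S k) (seq_a a b (S k)) y = phi a y.
Proof. rewrite <- rescale_a1, Fn_rescale, <- Hper, seq_a_0. ring. Qed.

Lemma Gpieces_succ (m : nat) (x : R) : (1 <= m)%nat ->
  Gpieces a b phi (S m) x y =
  if Rle_dec x (seq_a a b m) then Gpieces a b phi m x y else Fn a b phi (S m) x y.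
Proof. destruct m; [lia | reflexivity]. Qed.

Lemma Gpieces_block (k : nat) (x : R) :
  seq_a a b k <= x <= seq_a a b (S k) ->
  Gpieces a b phi (S k) x y = Fn a b phi (S k) x y.
Proof.
  revert x. induction k as [|k IH]; intros x Hx; [reflexivity|].
  rewrite Gpieces_succ by lia.
  destruct (Rle_dec x (seq_a a b (S k))) as [Hle|]; [|reflexivity].
  assert (x = seq_a a b (S k)) as -> by lra.
  rewrite IH by (split; [apply seq_a_le_succ | lra]).
  rewrite Fn_right, Fn_left. reflexivity.
Qed.

Lemma Gpieces_stable (k n : nat) (x : R) : (S k <= n)%nat ->
  x <= seq_a a b (S k) -> Gpieces a b phi n x y = Gpieces a b phi (S k) x y.
Proof.
  intros Hkn Hx. induction Hkn as [|n Hkn IH]; [reflexivity|].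
  rewrite Gpieces_succ by lia.
  destruct (Rle_dec x (seq_a a b n)) as [|Hgt]; [exact IH|].
  exfalso. apply Hgt. eapply Rle_trans; [exact Hx | apply seq_a_mono; exact Hkn].
Qed.

(* The sequence T_n is eventually constant on each block, so the limit T
   equals F_{k+1} on the k-th block. *)
Lemma Tlim_block (k : nat) (x : R) :
  seq_a a b k <= x <= seq_a a b (S k) -> Tlim a b phi x y = Fn a b phi (S k) x y.
Proof.
  intros Hx. unfold Tlim.
  rewrite <- (Lim_seq_incr_n (fun n => Tn a b phi (S n) x y) (S k)).
  rewrite (Lim_seq_ext _ (fun _ => Fn a b phi (S k) x y)).
  { rewrite Lim_seq_const. reflexivity. }
  intros n. unfold Tn.
  destruct (Rle_dec x (seq_a a b (S (n + S k)))) as [|Hgt].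
  - rewrite (Gpieces_stable k) by (lia || lra). apply Gpieces_block. exact Hx.
  - exfalso. apply Hgt. eapply Rle_trans; [apply Hx | apply seq_a_mono; lia].
Qed.

Lemma Tlim_rescale (k : nat) (w : R) : a <= w <= seq_a a b 1 ->
  Tlim a b phi (rescale k w) y
  = / INR (S k) * phi w y + (1 - / INR (S k)) * phi a y.
Proof.
  intros Hw. rewrite (Tlim_block k) by (apply rescale_in_block; exact Hw).
  apply Fn_rescale.
Qed.

End Values.

(* The zigzag chain: points 2k and 2k+1 are the images of u and v in the
   k-th block. *)
Definition zigzag (u v : R) (j : nat) : R :=
  rescale (Nat.div2 j) (if Nat.odd j then v else u).

Lemma zigzag_even (u v : R) (k : nat) : zigzag u v (2 * k) = rescale k u.
Proof.
  unfold zigzag. rewrite Nat.div2_double, Nat.odd_mul. reflexivity.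
Qed.

Lemma zigzag_odd (u v : R) (k : nat) : zigzag u v (S (2 * k)) = rescale k v.
Proof.
  unfold zigzag. rewrite Nat.div2_succ_double, Nat.odd_succ, Nat.even_mul.
  reflexivity.
Qed.

Section Zigzag.

Variables u v : R.
Hypothesis Hu : a <= u.
Hypothesis Huv : u <= v.
Hypothesis Hv : v <= seq_a a b 1.

Lemma zigzag_mono (j : nat) : zigzag u v j <= zigzag u v (S j).
Proof.
  destruct (Nat.Even_or_Odd j) as [[k ->] | [k ->]].
  - rewrite zigzag_even, zigzag_odd. apply rescale_mono. exact Huv.
  - replace (2 * k + 1)%nat with (S (2 * k)) by lia.
    replace (S (S (2 * k))) with (2 * S k)%nat by lia.
    rewrite zigzag_odd, zigzag_even.
    apply Rle_trans with (seq_a a b (S k)); apply rescale_in_block; lra.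
Qed.

Lemma zigzag_range (j : nat) : a <= zigzag u v j <= b.
Proof.
  unfold zigzag. set (k := Nat.div2 j).
  assert (Hw : a <= (if Nat.odd j then v else u) <= seq_a a b 1)
    by (destruct (Nat.odd j); lra).
  pose proof (rescale_in_block k _ Hw).
  pose proof (seq_a_mono 0 k (Nat.le_0_l k)).
  pose proof (seq_a_le_b (S k)).
  rewrite seq_a_0 in *. lra.
Qed.

Lemma zigzag_variation (phi : R -> R -> R) (y : R) (N : nat) :
  phi (seq_a a b 0) y = phi (seq_a a b 1) y ->
  Rabs (phi v y - phi u y) * harmonic N
  <= rsum (fun i => Rabs (Tlim a b phi (zigzag u v (S i)) y
                          - Tlim a b phi (zigzag u v i) y)) (2 * N).
Proof.
  intros Hper.
  eapply Rle_trans; [| apply rsum_even_le; intro; apply Rabs_pos].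
  unfold harmonic. rewrite <- rsum_scal.
  right. apply rsum_ext_lt. intros k _.
  rewrite zigzag_odd, zigzag_even, !Tlim_rescale by (assumption || lra).
  replace (/ INR (S k) * phi v y + (1 - / INR (S k)) * phi a y
           - (/ INR (S k) * phi u y + (1 - / INR (S k)) * phi a y))
    with ((phi v y - phi u y) * / INR (S k)) by ring.
  rewrite Rabs_mult, Rabs_inv, (Rabs_right (INR (S k))); [reflexivity|].
  apply Rle_ge, pos_INR.
Qed.

End Zigzag.

End Construction.

Theorem mainTheorem9 (a b c d : R) (phi : R -> R -> R) :
  a < b -> c < d ->
  cont_on_rect phi (seq_a a b 0) (seq_a a b 1) c d ->
  (forall y, c <= y <= d -> phi (seq_a a b 0) y = phi (seq_a a b 1) y) ->
  (exists y0, c <= y0 <= d /\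
     exists x1 x2, seq_a a b 0 <= x1 <= seq_a a b 1 /\
                   seq_a a b 0 <= x2 <= seq_a a b 1 /\
                   phi x1 y0 <> phi x2 y0) ->
  ~ arzela_BV (Tlim a b phi) a b c d.
Proof.
  intros Hab _ _ Hper [y0 [Hy0 [x1 [x2 [Hx1 [Hx2 Hne]]]]]] HBV.
  destruct (arzela_BV_chain _ _ _ _ _ HBV) as [K HK].
  rewrite seq_a_0 in Hx1, Hx2.
  assert (Huv : exists u v, a <= u <= v /\ v <= seq_a a b 1 /\
                            0 < Rabs (phi v y0 - phi u y0)).
  { destruct (Rle_lt_dec x1 x2).
    - exists x1, x2. repeat split; try lra. apply Rabs_pos_lt. intro E. apply Hne. lra.
    - exists x2, x1. repeat split; try lra. apply Rabs_pos_lt. intro E. apply Hne. lra. }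
  destruct Huv as [u [v [Hu [Hv Hdel]]]].
  destruct (harmonic_unbounded (K / Rabs (phi v y0 - phi u y0))) as [N HN].
  assert (Hbound : Rabs (phi v y0 - phi u y0) * harmonic N <= K).
  { eapply Rle_trans.
    - apply (zigzag_variation a b Hab u v); [lra | lra | exact Hv | exact (Hper y0 Hy0)].
    - apply (HK (2 * N)%nat (zigzag a b u v) (fun _ => y0)); intros i _;
        [split; [apply zigzag_range |] | apply zigzag_mono |]; lra. }
  apply Rmult_lt_compat_l with (r := Rabs (phi v y0 - phi u y0)) in HN; [|exact Hdel].
  replace (Rabs (phi v y0 - phi u y0) * (K / Rabs (phi v y0 - phi u y0))) with K
    in HN by (field; lra).
  lra.
Qed.
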